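(* Let $k\ge r\ge3$ and $p,t\ge 0$ be integers and let $\pi\in\mathbb{C}_{<}(k,r|p,t)$ with $\pi^{(2)}_p\ge 2t+6$. Then $2t+2$ and $2t+4$ do not both occur as parts of $\pi$.
   Context: A partition $\pi=(\pi_1,\dots,\pi_\ell)$ is a finite non-increasing sequence of positive integers; ''$a$ occurs in $\pi$'' means $a=\pi_i$ for some $i$. Göllnitz–Gordon marking: $GG(\pi)$ assigns a positive integer (mark) to each part, processing the parts from smallest to largest; $\pi_i$ receives the smallest positive integer different from the marks of all parts $\pi_g$ with $g>i$ and $\pi_i-\pi_g\le 2$, where $\pi_i-\pi_g<2$ is required when $\pi_i$ is odd. An ''$r$-marked part $a$'' is a part equal to $a$ with mark $r$. $N_i(\pi)$ is the number of parts with mark $i$; $\pi^{(i)}_1\ge\dots\ge\pi^{(i)}_{N_i(\pi)}$ are the parts with mark $i$, with $\pi^{(i)}_0=+\infty$, $\pi^{(i)}_{N_i(\pi)+1}=-\infty$. $\mathbb{C}(k,r)$: partitions with (i) no odd part repeated; (ii) $\pi_i\ge\pi_{i+k-1}+2$ for $1\le i\le\ell-k+1$, strict if $\pi_i$ even; (iii) at most $r-1$ parts $\le 2$. Starting types: for $\pi\in\mathbb{C}(k,r)$ with $N_2=N_2(\pi)\ge1$, let $l$ be the largest integer in $\{0,\dots,N_2\}$ such that no odd part of $\pi$ is $\ge\pi^{(2)}_l$; for $l<i\le N_2$, $\pi^{(2)}_i$ has type $s_{-1}$. For $b=1,\dots,l$ in increasing order, type and auxiliary $\sigma_b$: for $b=1$: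 Case 1: 1-marked part $\pi^{(2)}_1-1$ exists and $\pi^{(2)}_1+2$ does not occur: type $s_0$, $\sigma_1=\pi^{(2)}_1-1$; Case 2: 1-marked $\pi^{(2)}_1-2$ exists and $\pi^{(2)}_1+2$ does not occur: type $s_1$, $\sigma_1=\pi^{(2)}_1-2$; Case 3: 1-marked $\pi^{(2)}_1+2$ exists: type $s_2$, $\sigma_1=\pi^{(2)}_1+2$; Case 4: 1-marked $\pi^{(2)}_1$ exists: type $s_3$, $\sigma_1=\pi^{(2)}_1$. For $2\le b\le l$: Case 1: 1-marked $\pi^{(2)}_b-1$ exists and, if a 1-marked $\pi^{(2)}_b+2$ exists, $\sigma_{b-1}=\pi^{(2)}_b+2$: type $s_0$, $\sigma_b=\pi^{(2)}_b-1$; Case 2: same with $\pi^{(2)}_b-2$: type $s_1$, $\sigma_b=\pi^{(2)}_b-2$; Case 3: 1-marked $\pi^{(2)}_b+2$ exists and $\sigma_{b-1}\ne\pi^{(2)}_b+2$: type $s_2$, $\sigma_b=\pi^{(2)}_b+2$; Case 4: 1-marked $\pi^{(2)}_b$ exists: type $s_3$, $\sigma_b=\pi^{(2)}_b$. $\mathbb{C}_{<}(k,r|p,t)$: the set of $\pi\in\mathbb{C}(k,r)$ such that (1) no odd part is $\ge 2t+1$; (2) $\pi^{(2)}_{p+1}<2t+1<\pi^{(2)}_p$ (in particular $p\le N_2(\pi)$); (3) if $\pi^{(2)}_p=2t+2$ then it is of starting type $s_2$ or $s_3$; (4) if $\pi^{(2)}_{p+1}=2t$ then it is of starting type $s_0$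 or $s_1$. *)

From mathcomp Require Import all_boot.
Set Implicit Arguments. Unset Strict Implicit. Unset Printing Implicit Defensive.

(* A partition: a finite non-increasing sequence of positive integers,
   pi = [:: pi_1; ...; pi_l] (pi_i is  nth 0 s (i-1)). *)
Definition is_partition (s : seq nat) : Prop :=
  sorted (fun a b => b <= a) s /\ all (fun a => 0 < a) s.

Definition mex_pos (L : seq nat) : nat :=
  head 1 [seq n <- iota 1 (size L).+1 | n \notin L].

(* Goellnitz-Gordon marking: gg s is the list of marks, aligned with s. *)
Fixpoint gg (s : seq nat) : seq nat :=
  match s with
  | [::] => [::]
  | x :: r =>
      let mr := gg r in
      mex_pos [seq ym.2 | ym <- zip r mr &
                 (x - ym.1 <= 2) && (odd x ==> (x - ym.1 < 2))] :: mr
  end.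

Definition marked_parts (s : seq nat) (i : nat) : seq nat :=
  [seq xm.1 | xm <- zip s (gg s) & xm.2 == i].

Definition Nmark (s : seq nat) (i : nat) : nat := size (marked_parts s i).

Definition marked (s : seq nat) (r a : nat) : bool := (a, r) \in zip s (gg s).

Inductive xnat := Pinf | Fin of nat | Minf.

Definition xlt (x y : xnat) : Prop :=
  match x, y with
  | Minf, Minf => False
  | Minf, _ => True
  | Fin a, Fin b => a < b
  | Fin _, Pinf => True
  | Fin _, Minf => False
  | Pinf, _ => False
  end.

Definition xle (x y : xnat) : Prop := x = y \/ xlt x y.

Definition piM (s : seq nat) (i j : nat) : xnat :=
  if j == 0 then Pinf
  else if j <= Nmark s i then Fin (nth 0 (marked_parts s i) j.-1)
  else Minf.

Definition inC (k r : nat) (s : seq nat) : Prop :=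
  is_partition s /\
  (forall a, a \in s -> odd a -> count_mem a s = 1) /\
  (* (ii) pi_i >= pi_{i+k-1} + 2, strictly if pi_i even (0-based index i) *)
  (forall i, i + k.-1 < size s ->
     if odd (nth 0 s i) then nth 0 s (i + k.-1) + 2 <= nth 0 s i
     else nth 0 s (i + k.-1) + 2 < nth 0 s i) /\
  count (fun a => a <= 2) s <= r.-1.

Inductive stype := s_m1 | s_0 | s_1 | s_2 | s_3.

(* one step of the case analysis for the part x = pi^(2)_b;
   [first] is b = 1, [prev] is sigma_(b-1) (None if undefined).
   The four cases are mutually exclusive. *)
Definition st_step (s : seq nat) (first : bool) (prev : option nat) (x : nat)
  : option (stype * nat) :=
  let m1 := marked s 1 in
  if first then
    if m1 x.-1 && (x.+2 \notin s) then Some (s_0, x.-1)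
    else if m1 (x - 2) && (x.+2 \notin s) then Some (s_1, x - 2)
    else if m1 x.+2 then Some (s_2, x.+2)
    else if m1 x then Some (s_3, x)
    else None
  else match prev with
  | None => None
  | Some sg =>
    let c12 := m1 x.+2 ==> (sg == x.+2) in
    if m1 x.-1 && c12 then Some (s_0, x.-1)
    else if m1 (x - 2) && c12 then Some (s_1, x - 2)
    else if m1 x.+2 && (sg != x.+2) then Some (s_2, x.+2)
    else if m1 x then Some (s_3, x)
    else None
  end.

Fixpoint st_types (s : seq nat) (first : bool) (prev : option nat) (xs : seq nat)
  : seq (option stype) :=
  match xs with
  | [::] => [::]
  | x :: xs' =>
    match st_step s first prev x with
    | Some (ty, sg) => Some ty :: st_types s false (Some sg) xs'
    | None => None :: st_types s false None xs'
    end
  end.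

(* l : the largest l in {0..N_2} such that no odd part is >= pi^(2)_l *)
Definition l_good (s : seq nat) (l : nat) : bool :=
  (l == 0) || ~~ has (fun a => odd a && (nth 0 (marked_parts s 2) l.-1 <= a)) s.

Definition l_index (s : seq nat) : nat :=
  last 0 [seq j <- iota 0 (Nmark s 2).+1 | l_good s j].

(* starting type of pi^(2)_j (1 <= j <= N_2); None = no case applies *)
Definition start_type (s : seq nat) (j : nat) : option stype :=
  if l_index s < j then Some s_m1
  else nth None (st_types s true None (take (l_index s) (marked_parts s 2))) j.-1.

Definition inC_lt (k r p t : nat) (s : seq nat) : Prop :=
  inC k r s /\
  (forall a, a \in s -> odd a -> a < 2 * t + 1) /\
  xlt (piM s 2 p.+1) (Fin (2 * t + 1)) /\ xlt (Fin (2 * t + 1)) (piM s 2 p) /\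
  (piM s 2 p = Fin (2 * t + 2) ->
     start_type s p = Some s_2 \/ start_type s p = Some s_3) /\
  (piM s 2 p.+1 = Fin (2 * t) ->
     start_type s p.+1 = Some s_0 \/ start_type s p.+1 = Some s_1).

(** No 2-marked part lies in the window [2t+1 <= x < 2t+6]: the 2-marked
    parts are either at least [pi^(2)_p >= 2t+6] or at most
    [pi^(2)_(p+1) < 2t+1].  Hence a part [2t+4] is 1-marked, since a larger
    mark would force a nearby smaller 2-marked part inside the window.  A part
    [2t+2] is then neither 1-marked (it is near [2t+4]) nor 2-marked, so its
    mark exceeds 2 and it has nearby smaller 1- and 2-marked parts; as odd
    parts are below [2t+1], both must equal [2t].  Thus [2t] is 2-marked, so
    it is [pi^(2)_(p+1)], and condition (4) makes its starting type provide a
    1-marked part [2t-1] or [2t-2], which is near the 1-marked part [2t]. *)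

From mathcomp Require Import all_boot.
From mathcomp Require Import zify.
Set Implicit Arguments. Unset Strict Implicit.

Lemma has_notin_iota (L : seq nat) : has (fun n => n \notin L) (iota 1 (size L).+1).
Proof.
case: (boolP (has _ _)) => // /hasPn all_in.
have : size (iota 1 (size L).+1) <= size L.
  by apply: uniq_leq_size (iota_uniq _ _) _ => x /all_in; rewrite negbK.
by rewrite size_iota ltnn.
Qed.

Lemma lt_head_filter_iota (P : pred nat) a m d n :
  has P (iota a m) -> a <= n -> n < head d [seq x <- iota a m | P x] -> ~~ P n.
Proof.
elim: m a => [|m IHm] a //=; case: ifP => [_ _ an na | Pa /= hasP].
  by have := leq_ltn_trans an na; rewrite ltnn.
by rewrite leq_eqVlt => /predU1P [<-|]; [rewrite Pa | apply: IHm].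
Qed.

Lemma mex_pos_mem (L : seq nat) :
  mex_pos L \in [seq n <- iota 1 (size L).+1 | n \notin L].
Proof.
rewrite /mex_pos; have := has_notin_iota L; rewrite has_filter.
by case: [seq _ <- _ | _] => //= x r _; rewrite mem_head.
Qed.

Lemma mex_pos_notin (L : seq nat) : mex_pos L \notin L.
Proof. by have := mex_pos_mem L; rewrite mem_filter => /andP[]. Qed.

Lemma mex_pos_gt0 (L : seq nat) : 0 < mex_pos L.
Proof. by have := mex_pos_mem L; rewrite mem_filter mem_iota => /and3P[]. Qed.

Lemma mem_lt_mex_pos (L : seq nat) n : 0 < n -> n < mex_pos L -> n \in L.
Proof. by move=> n_gt0 /(lt_head_filter_iota (has_notin_iota L) n_gt0); rewrite negbK. Qed.

Definition gg_near (x y : nat) : bool := (x - y <= 2) && (odd x ==> (x - y < 2)).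

Lemma gg_near_le2 x y : gg_near x y -> x - y <= 2.
Proof. by case/andP. Qed.

Lemma gg_near_even x y : ~~ odd x -> x - y <= 2 -> gg_near x y.
Proof. by rewrite /gg_near => /negbTE -> ->. Qed.

Definition later_marks (s : seq nat) (i : nat) : seq nat :=
  [seq ym.2 | ym <- zip (drop i.+1 s) (drop i.+1 (gg s)) & gg_near (nth 0 s i) ym.1].

Lemma size_gg (s : seq nat) : size (gg s) = size s.
Proof. by elim: s => //= x r ->. Qed.

Lemma drop_gg (s : seq nat) i : gg (drop i s) = drop i (gg s).
Proof. by elim: s i => [|x r IHr] [|i] /=. Qed.

Lemma nth_gg (s : seq nat) i : i < size s -> nth 0 (gg s) i = mex_pos (later_marks s i).
Proof.
move=> lt_i_s; have := drop_gg s i.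
rewrite (drop_nth 0 lt_i_s) (drop_nth 0 (_ : i < size (gg s))) ?size_gg //=.
by case=> <- _; rewrite /later_marks drop_gg.
Qed.

Lemma later_marksP (s : seq nat) i m :
  m \in later_marks s i <->
  exists j, [/\ i < j, j < size s, gg_near (nth 0 s i) (nth 0 s j) & nth 0 (gg s) j = m].
Proof.
have size_zip_drop : size (zip (drop i.+1 s) (drop i.+1 (gg s))) = size s - i.+1.
  by rewrite size_zip !size_drop size_gg minnn.
split.
  case/mapP => ym; rewrite mem_filter => /andP[near_y] /(nthP (0, 0)) [q].
  rewrite size_zip_drop => lt_q; rewrite nth_zip ?size_drop ?size_gg // !nth_drop.
  move=> def_ym; rewrite -def_ym /= in near_y * => ->.
  by exists (i.+1 + q); split => //; lia.
case=> j [lt_ij lt_j_s near_j <-]; apply/mapP.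
exists (nth 0 s j, nth 0 (gg s) j); rewrite // mem_filter near_j /=.
apply/(nthP (0, 0)); exists (j - i.+1); first by rewrite size_zip_drop; lia.
by rewrite nth_zip ?size_drop ?size_gg // !nth_drop subnKC.
Qed.

Lemma gg_gt0 (s : seq nat) i : i < size s -> 0 < nth 0 (gg s) i.
Proof. by move=> lt_i_s; rewrite nth_gg // mex_pos_gt0. Qed.

Lemma gg_neq_near (s : seq nat) i j : i < j -> j < size s ->
  gg_near (nth 0 s i) (nth 0 s j) -> nth 0 (gg s) i != nth 0 (gg s) j.
Proof.
move=> lt_ij lt_j_s near_ij; rewrite nth_gg ?(ltn_trans lt_ij) //.
apply: contraNneq (mex_pos_notin (later_marks s i)) => ->.
by apply/later_marksP; exists j.
Qed.

Lemma gg_lt_mark (s : seq nat) i m : i < size s -> 0 < m -> m < nth 0 (gg s) i ->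
  exists j, [/\ i < j, j < size s, gg_near (nth 0 s i) (nth 0 s j) & nth 0 (gg s) j = m].
Proof. by move=> lt_i_s m_gt0; rewrite nth_gg // => /(mem_lt_mex_pos m_gt0)/later_marksP. Qed.

Lemma sorted_geq_nth (s : seq nat) i j :
  sorted geq s -> i <= j -> j < size s -> nth 0 s j <= nth 0 s i.
Proof.
move=> s_sorted le_ij lt_j_s.
by apply: (sorted_leq_nth (rev_trans leq_trans) leqnn) => //; rewrite inE (leq_ltn_trans le_ij).
Qed.

Lemma markedP (s : seq nat) m a :
  marked s m a <-> exists j, [/\ j < size s, nth 0 s j = a & nth 0 (gg s) j = m].
Proof.
rewrite /marked; split.
  case/(nthP (0, 0)) => j; rewrite size_zip size_gg minnn => lt_j_s.
  by rewrite nth_zip ?size_gg // => -[<- <-]; exists j.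
case=> j [lt_j_s <- <-]; apply/(nthP (0, 0)); exists j.
  by rewrite size_zip size_gg minnn.
by rewrite nth_zip ?size_gg.
Qed.

Lemma marked_mem (s : seq nat) m a : marked s m a -> a \in s.
Proof. by case/markedP => j [lt_j_s <- _]; apply: mem_nth. Qed.

Lemma mem_marked (s : seq nat) a : a \in s -> exists m, marked s m a.
Proof. by case/(nthP 0) => j lt_j_s def_a; exists (nth 0 (gg s) j); apply/markedP; exists j. Qed.

Lemma marked_gt0 (s : seq nat) m a : marked s m a -> 0 < m.
Proof. by case/markedP => j [lt_j_s _ <-]; apply: gg_gt0. Qed.

Lemma marked_neq_near (s : seq nat) m n x y : sorted geq s -> y < x -> gg_near x y ->
  marked s m x -> marked s n y -> m != n.
Proof.
move=> s_sorted lt_yx near_xy /markedP[i [lt_i_s def_x <-]] /markedP[j [lt_j_s def_y <-]].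
apply: gg_neq_near => //; last by rewrite def_x def_y.
rewrite ltnNge; apply: contraTN lt_yx => le_ji.
by rewrite -leqNgt -def_x -def_y sorted_geq_nth.
Qed.

Lemma marked_lt_mark (s : seq nat) m n x : sorted geq s -> marked s m x ->
  0 < n -> n < m -> exists y, [/\ marked s n y, y <= x & gg_near x y].
Proof.
move=> s_sorted /markedP[i [lt_i_s <- <-]] n_gt0 lt_n_m.
have [j [lt_ij lt_j_s near_ij mark_j]] := gg_lt_mark lt_i_s n_gt0 lt_n_m.
exists (nth 0 s j); split=> //; first by apply/markedP; exists j.
exact/sorted_geq_nth/lt_j_s/ltnW.
Qed.

Lemma xle_FinE a b : xle (Fin a) (Fin b) <-> a <= b.
Proof.
split=> [[[->] // | /ltnW //] | ]; rewrite leq_eqVlt => /predU1P[->|lt_ab]; first by left.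
by right.
Qed.

Lemma xle_Fin_trans a b y : xle (Fin a) y -> xle y (Fin b) -> a <= b.
Proof.
case: y => [_ [] //|c /xle_FinE le_ac /xle_FinE|[] //]; exact: leq_trans.
Qed.

Lemma xle_xlt_Fin_trans a b y : xle (Fin a) y -> xlt y (Fin b) -> a < b.
Proof. by case: y => [|c /xle_FinE|[]] //; apply: leq_ltn_trans. Qed.

Lemma mem_marked_parts (s : seq nat) m a : (a \in marked_parts s m) = marked s m a.
Proof.
apply/mapP/idP => [[[x y]] | marked_a]; last by exists (a, m); rewrite // mem_filter eqxx.
by rewrite mem_filter /= => /andP[/eqP -> ?] ->.
Qed.

Lemma sorted_marked_parts (s : seq nat) m : sorted geq s -> sorted geq (marked_parts s m).
Proof.
move=> s_sorted; apply: (subseq_sorted (leT := geq) (rev_trans leq_trans)) s_sorted.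
rewrite /marked_parts -[s in subseq _ s](@unzip1_zip _ _ s (gg s)) ?size_gg //.
by rewrite map_subseq ?filter_subseq.
Qed.

Lemma piM_FinE (s : seq nat) m j x :
  piM s m j = Fin x -> nth 0 (marked_parts s m) j.-1 = x.
Proof. by rewrite /piM; case: eqP => // _; case: ifP => // _ [->]. Qed.

Lemma marked_piM_split (s : seq nat) m p x : sorted geq s -> marked s m x ->
  xle (piM s m p) (Fin x) \/ xle (Fin x) (piM s m p.+1).
Proof.
move=> s_sorted; rewrite -mem_marked_parts => /(nthP 0)[q lt_q <-].
have L_sorted := sorted_marked_parts m s_sorted.
rewrite /piM /Nmark /=; case: (ltnP q p) => [lt_qp | le_pq].
  left; rewrite gtn_eqF ?(leq_ltn_trans _ lt_qp) //; case: ifP => [le_p_N | _]; last by right.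
  by apply/xle_FinE/sorted_geq_nth => //; lia.
by right; rewrite (leq_ltn_trans le_pq lt_q); apply/xle_FinE/sorted_geq_nth.
Qed.

Lemma st_step_s01 (s : seq nat) first prev x ty sg :
  st_step s first prev x = Some (ty, sg) -> ty = s_0 \/ ty = s_1 ->
  marked s 1 x.-1 \/ marked s 1 (x - 2).
Proof.
move=> + ty01; rewrite /st_step; case: first; last case: prev => [sg'|] //;
  repeat case: ifP => [cond [def_ty _] | _] //; subst ty; case: ty01 => // _;
  case/andP: cond => marked_y _; by [left | right].
Qed.

Lemma size_st_types (s : seq nat) first prev xs :
  size (st_types s first prev xs) = size xs.
Proof.
by elim: xs first prev => //= x xs IHxs first prev; case: st_step => [[ty sg]|] /=; rewrite IHxs.
Qed.

Lemma st_types_s01 (s : seq nat) first prev xs q :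
  nth None (st_types s first prev xs) q = Some s_0 \/
  nth None (st_types s first prev xs) q = Some s_1 ->
  marked s 1 (nth 0 xs q).-1 \/ marked s 1 (nth 0 xs q - 2).
Proof.
elim: xs first prev q => [|x xs IHxs] first prev q; first by rewrite /= nth_nil; case.
rewrite /=; case def_step: st_step => [[ty sg]|]; case: q => [|q] /=; try exact: IHxs.
  by move=> ty01; apply: st_step_s01 def_step _; case: ty01 => -[->]; [left | right].
by case.
Qed.

Lemma start_type_s01 (s : seq nat) j x : piM s 2 j = Fin x ->
  start_type s j = Some s_0 \/ start_type s j = Some s_1 ->
  marked s 1 x.-1 \/ marked s 1 (x - 2).
Proof.
move=> /piM_FinE <-; rewrite /start_type; case: ifP => [_ [] // | _ types01].
have lt_j_take : j.-1 < size (take (l_index s) (marked_parts s 2)).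
  rewrite -(size_st_types s true None); apply: contraPT types01; rewrite -leqNgt.
  by move=> /(nth_default None) ->; case.
move: (st_types_s01 types01); rewrite nth_take //.
by move: lt_j_take; rewrite size_take_min; lia.
Qed.

Section MarksNearThreshold.

Variables (p t : nat) (s : seq nat).
Hypothesis s_sorted : sorted geq s.
Hypothesis odd_parts_lt : forall a, a \in s -> odd a -> a < 2 * t + 1.
Hypothesis piM_succ_lt : xlt (piM s 2 p.+1) (Fin (2 * t + 1)).
Hypothesis piM_ge : xle (Fin (2 * t + 6)) (piM s 2 p).

Lemma marked2_outside_window x : marked s 2 x -> x < 2 * t + 1 \/ 2 * t + 6 <= x.
Proof.
case/(marked_piM_split p s_sorted) => [le_piM | ge_piM].
  by right; apply: xle_Fin_trans piM_ge le_piM.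
by left; apply: xle_xlt_Fin_trans ge_piM piM_succ_lt.
Qed.

Lemma marked_window_neq2 m x : 2 * t + 1 <= x < 2 * t + 6 -> marked s m x -> m != 2.
Proof.
move=> /andP[x_ge x_lt]; apply: contraTneq => ->.
by apply/negP => /marked2_outside_window; lia.
Qed.

Lemma marked_2t4_eq1 m : marked s m (2 * t + 4) -> m = 1.
Proof.
move=> marked_m; have m_gt0 := marked_gt0 marked_m.
have m_neq2 : m != 2 by apply: marked_window_neq2 marked_m; lia.
case: (ltnP 2 m) => [lt_2m | ]; last by lia.
have [y [marked_y le_y /gg_near_le2 near_y]] := marked_lt_mark s_sorted marked_m (ltn0Sn 1) lt_2m.
have y_in_window : 2 * t + 1 <= y < 2 * t + 6 by lia.
by move: (marked_window_neq2 y_in_window marked_y); rewrite eqxx.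
Qed.

Lemma marked_2t2_gt2 m : 2 * t + 4 \in s -> marked s m (2 * t + 2) -> 2 < m.
Proof.
case/mem_marked => m4 marked_m4; have m4_eq1 := marked_2t4_eq1 marked_m4; subst m4.
move=> marked_m; have m_gt0 := marked_gt0 marked_m.
have m_neq1 : 1 != m.
  by apply: marked_neq_near s_sorted _ _ marked_m4 marked_m; rewrite ?gg_near_even ?oddD ?oddM; lia.
have m_neq2 : m != 2 by apply: marked_window_neq2 marked_m; lia.
lia.
Qed.

Lemma marked_2t_lt3 n : 2 * t + 4 \in s -> 2 * t + 2 \in s -> 0 < n < 3 -> marked s n (2 * t).
Proof.
move=> in4 /mem_marked[m marked_m] /andP[n_gt0 lt_n3].
have lt_nm := leq_trans lt_n3 (marked_2t2_gt2 in4 marked_m).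
have [y [marked_y le_y /gg_near_le2 near_y]] := marked_lt_mark s_sorted marked_m n_gt0 lt_nm.
have y_neq_odd : y != 2 * t + 1.
  apply/eqP => def_y; have := odd_parts_lt (marked_mem marked_y).
  by rewrite def_y oddD oddM ltnn => /(_ isT).
have y_neq_2t2 : y != 2 * t + 2.
  by apply: contraTneq lt_n3 => def_y; rewrite -leqNgt (marked_2t2_gt2 in4) -?def_y.
by have -> : 2 * t = y by lia.
Qed.

Lemma piM_succ_2t : marked s 2 (2 * t) -> piM s 2 p.+1 = Fin (2 * t).
Proof.
case/(marked_piM_split p s_sorted) => [le_piM | ].
  by have := xle_Fin_trans piM_ge le_piM; lia.
move: piM_succ_lt; case: (piM s 2 p.+1) => [//|c /= lt_c /xle_FinE le_c|_ []//].
by congr Fin; lia.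
Qed.

End MarksNearThreshold.

Theorem corollary2p5 (k r p t : nat) (s : seq nat) :
  3 <= r -> r <= k ->
  inC_lt k r p t s ->
  xle (Fin (2 * t + 6)) (piM s 2 p) ->
  ~ ((2 * t + 2 \in s) /\ (2 * t + 4 \in s)).
Proof.
move=> _ _ [[[s_sorted parts_gt0] _] [odd_parts_lt [piM_succ_lt [_ [_ type_succ]]]]] piM_ge [in2 in4].
have marked_2t_at := marked_2t_lt3 s_sorted odd_parts_lt piM_succ_lt piM_ge in4 in2.
have marked1_2t : marked s 1 (2 * t) by apply: marked_2t_at.
have marked2_2t : marked s 2 (2 * t) by apply: marked_2t_at.
have t_gt0 : 0 < 2 * t := allP parts_gt0 _ (marked_mem marked1_2t).
have piM_2t := piM_succ_2t s_sorted piM_succ_lt piM_ge marked2_2t.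
have no_marked1_below y : marked s 1 y -> y < 2 * t -> 2 * t - y <= 2 -> False.
  move=> marked_y lt_y near_y; have even_2t : ~~ odd (2 * t) by rewrite oddM.
  by have := marked_neq_near s_sorted lt_y (gg_near_even even_2t near_y) marked1_2t marked_y.
by case: (start_type_s01 piM_2t (type_succ piM_2t)) => /no_marked1_below; apply; lia.
Qed.
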